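(* Let $C$ be a conformal algebra satisfying a pseudo-identity $\sum_{\sigma\in S_n}(\sigma\otimes_H\mathrm{id}_C)\,t^*_\sigma(a_{1\sigma},\dots,a_{n\sigma})=0$ for all $a_1,\dots,a_n\in C$ (where each $t_\sigma$ is a linear combination of bracketings of an $n$-letter word). Let $\pi=(m_1,\dots,m_n)$ be positive integers, $G_i\in H^{\otimes m_i}$, $a_i\in C$ and $A_i=G_i\otimes_H a_i\in H^{\otimes m_i}\otimes_H C$. Then, for the expanded pseudoproduct, $$\sum_{\sigma\in S_n}(\sigma_\pi\otimes_H\mathrm{id}_C)\,t^*_\sigma(A_{1\sigma},\dots,A_{n\sigma})=0,$$ where $\sigma_\pi\in S_{m_1+\cdots+m_n}$ is the permutation with $\sigma_\pi\big((\Delta^{(m_{1\sigma})}\otimes\cdots\otimes\Delta^{(m_{n\sigma})})(F)\big)=(\Delta^{(m_1)}\otimes\cdots\otimes\Delta^{(m_n)})(\sigma(F))$ for all $F\in H^{\otimes n}$, i.e. $\sigma_\pi$ permutes the consecutive blocks of tensor factors (the $k$-th block having length $m_{k\sigma}$) by moving the $k$-th block to block position $k\sigma$, preserving order within blocks.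
   Context: $\Bbbk$ is a field of characteristic $0$, $H=\Bbbk[D]$ with Hopf structure $\Delta(D)=D\otimes1+1\otimes D$, $\varepsilon(D)=0$, $S(D)=-D$; iterated coproduct $\Delta^{(1)}=\mathrm{id}$, $\Delta^{(k+1)}=(\mathrm{id}\otimes\Delta^{(k)})\Delta$; $H$ acts on $H^{\otimes n}$ from the right by $(f_1\otimes\cdots\otimes f_n)h=f_1h_{(1)}\otimes\cdots\otimes f_nh_{(n)}$ and $H^{\otimes n}\otimes_H M$ is taken w.r.t. this action. A conformal algebra is a unital left $H$-module $C$ with bilinear operations $a_{(n)}b$ ($n\ge0$) such that $a_{(n)}b=0$ for $n\gg0$, $(Da)_{(n)}b=-na_{(n-1)}b$, $a_{(n)}(Db)=D(a_{(n)}b)+na_{(n-1)}b$. Pseudoproduct $a*b=\sum_{s\ge0}\frac{(-D)^s}{s!}\otimes1\otimes_H(a_{(s)}b)$; expanded pseudoproduct: if $a*b=\sum_i f_i\otimes g_i\otimes_H c_i$ then $(F\otimes_H a)*(G\otimes_H b)=\sum_iF\Delta^{(n)}(f_i)\otimes G\Delta^{(m)}(g_i)\otimes_H c_i$ for $F\in H^{\otimes n},G\in H^{\otimes m}$. For a bracketing $t$ and arguments $B_i\in H^{\otimes m_i}\otimes_HC$, $t^*(B_1,\dots,B_n)$ is obtained by replacing each product by the expanded pseudoproduct (elements $a\in C$ are regarded as $1\otimes_Ha$). $i\sigma$ denotes the image of $i$ under $\sigma$; for a permutation $\tau$ of tensor factors, $\tau\otimes_H\mathrm{id}_C$ is the induced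 map, where $\sigma\in S_n$ acts on $H^{\otimes n}$ by sending the $k$-th factor to position $k\sigma$. *)

From HB Require Import structures.
From mathcomp Require Import all_boot all_order fingroup perm all_algebra.
From Stdlib Require Import ClassicalEpsilon.
Set Implicit Arguments. Unset Strict Implicit. Unset Printing Implicit Defensive.
Import GRing.Theory.
Local Open Scope ring_scope.

(* H = k[D].  H^{(x)m} = k[x_1,...,x_m] (x_i = D in the i-th factor).
   An element of H^{(x)m} (x)_k C is represented as a formal finite sum
   [:: (e_1,c_1); ...] meaning  sum_j x^{e_j} (x) c_j  (e_j : exponent vector
   of length m; k-scalars are absorbed into the C-component). *)
Definition tens (C : Type) := seq (seq nat * C).

Definition coefs (k : fieldType) (C : lmodType k) (t : tens C) (e : seq nat) : C :=
  \sum_(p <- t | p.1 == e) p.2.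

Record conformal (k : fieldType) (C : lmodType k) := Conformal {
  cD : {linear C -> C};
  cprod : nat -> C -> C -> C;
  cprod_linl : forall n b, linear (fun a => cprod n a b);
  cprod_linr : forall n a, linear (cprod n a);
  cprod_loc : forall a b, exists N, forall n, (N <= n)%N -> cprod n a b = 0;
  cprodDl : forall n a b, cprod n (cD a) b = - (cprod n.-1 a b *+ n);
  cprodDr : forall n a b, cprod n a (cD b) = cD (cprod n a b) + cprod n.-1 a b *+ n
}.

(* binary bracketings *)
Inductive btree := BLeaf | BNode of btree & btree.
Fixpoint leaves (T : btree) : nat :=
  match T with BLeaf => 1 | BNode l r => leaves l + leaves r end.

Section Conf.
Variables (k : fieldType) (C : lmodType k) (cs : @conformal k C).

(* right action of D on H^{(x)m} (x) C in the first factor: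
   multiplication by Delta^{(m)}(D) = x_1 + ... + x_m *)
Definition actD (t : tens C) : tens C :=
  flatten [seq [seq (incr_nth p.1 i, p.2) | i <- iota 0 (size p.1)] | p <- t].

Definition act_hs (s : nat) (t : tens C) : tens C :=
  [seq (p.1, ((s`!%:R : k)^-1 * (-1) ^+ s) *: p.2) | p <- iter s actD t].

(* H^{(x)m} (x)_H C : t represents 0 iff t lies in the k-span of the
   relations  (x^e . D) (x) c - x^e (x) D c,  with |e| = m *)
Definition rel_gen (p : seq nat * C) : tens C :=
  [seq (incr_nth p.1 i, p.2) | i <- iota 0 (size p.1)] ++ [:: (p.1, - cD cs p.2)].

Definition tz (m : nat) (t : tens C) : Prop :=
  exists r : seq (seq nat * C), all (fun p => size p.1 == m) r /\
    forall e, coefs t e = coefs (flatten (map rel_gen r)) e.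

Definition cbound (a b : C) : nat :=
  proj1_sig (constructive_indefinite_description _ (cprod_loc cs a b)).

(* expanded pseudoproduct:
   (F (x) a) * (G (x) b) = sum_s F Delta((-D)^s/s!) (x) G (x)_H a_(s) b *)
Definition pprod (A B : tens C) : tens C :=
  flatten (flatten [seq [seq
     [seq (r.1 ++ q.1, r.2) | r <- act_hs s [:: (p.1, cprod cs s p.2 q.2)]]
       | s <- iota 0 (cbound p.2 q.2)] | p <- A, q <- B]).

Fixpoint teval (T : btree) (args : seq (tens C)) : tens C :=
  match T with
  | BLeaf => head [::] args
  | BNode l r => pprod (teval l (take (leaves l) args)) (teval r (drop (leaves l) args))
  end.

Definition tscale (a : k) (t : tens C) : tens C := [seq (p.1, a *: p.2) | p <- t].

Definition lceval (L : seq (k * btree)) (args : seq (tens C)) : tens C :=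
  flatten [seq tscale p.1 (teval p.2 args) | p <- L].

(* a in C regarded as 1 (x)_H a *)
Definition elt (a : C) : tens C := [:: ([:: 0%N], a)].

(* G (x)_H a for G in H^{(x)m} given as a list of (coefficient, exponent) *)
Definition gtens (G : seq (k * seq nat)) (a : C) : tens C :=
  [seq (p.2, p.1 *: a) | p <- G].
End Conf.

(* sigma in S_n acts on H^{(x)n} sending the k-th factor to position k sigma
   (k sigma := s k) : the exponent at position j of the result is the
   exponent at position (sigma^-1 j) of the argument *)
Definition act_perm (C : Type) (n : nat) (s : 'S_n) (t : tens C) : tens C :=
  [seq ([seq nth 0%N p.1 ((s^-1)%g j) | j <- enum 'I_n], p.2) | p <- t].

Fixpoint blocks (l : seq nat) (e : seq nat) : seq (seq nat) :=
  match l with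
  | [::] => [::]
  | x :: l' => take x e :: blocks l' (drop x e)
  end.

(* sigma_pi : the k-th block (of length m (k sigma)) is moved to block
   position k sigma, order inside blocks preserved *)
Definition act_sigma_pi (C : Type) (n : nat) (m : 'I_n -> nat) (s : 'S_n)
    (t : tens C) : tens C :=
  [seq (flatten [seq nth [::] (blocks [seq m (s i) | i <- enum 'I_n] p.1) ((s^-1)%g j)
                | j <- enum 'I_n], p.2) | p <- t].

(* Let [Phi] be the map
     [F (x) c |-> (G_1 (x) ... (x) G_n) (Delta^{(m_1)} (x) ... (x) Delta^{(m_n)})(F) (x) c]
   from [H^{(x)n} (x) C] to [H^{(x)(m_1 + ... + m_n)} (x) C].  As every [Delta^{(m)}] is an
   algebra map, [Phi] commutes with the right action of [D], so it descends to [(x)_H], and for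
   the same reason it is multiplicative for the expanded pseudoproduct (splitting [G] along the
   bracketing).  Since [Phi] sends [1 (x)_H a_i] to [A_i], it maps [t^*(a_1, ..., a_n)] to
   [t^*(A_1, ..., A_n)]; and it turns the action of [sigma] on [H^{(x)n}] into that of [sigma_pi].
   Applying [Phi] to the pseudo-identity for [a_1, ..., a_n] gives the claim. *)

From HB Require Import structures.
From mathcomp Require Import all_boot all_order fingroup perm all_algebra.
From mathcomp Require Import zify.
From Stdlib Require Import ClassicalEpsilon.
Set Implicit Arguments. Unset Strict Implicit. Unset Printing Implicit Defensive.
Import GRing.Theory.
Local Open Scope ring_scope.

Section Coefficients.
Variables (k : fieldType) (V : lmodType k).
Implicit Types t u : tens V.

Definition eqc t u := forall e, coefs t e = coefs u e.

Lemma coefsE t e : coefs t e = \sum_(p <- t) (if p.1 == e then p.2 else 0).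
Proof. by rewrite /coefs big_mkcond. Qed.

Lemma coefs_cat t u e : coefs (t ++ u) e = coefs t e + coefs u e.
Proof. by rewrite /coefs big_cat. Qed.

Lemma coefs_flatten (ts : seq (tens V)) e :
  coefs (flatten ts) e = \sum_(t <- ts) coefs t e.
Proof. by rewrite /coefs big_flatten. Qed.

Lemma eqc_sym t u : eqc t u -> eqc u t.
Proof. by move=> h e; rewrite h. Qed.

Lemma eqc_trans t u w : eqc t u -> eqc u w -> eqc t w.
Proof. by move=> h1 h2 e; rewrite h1 h2. Qed.

Lemma eqc_cat t t' u u' : eqc t t' -> eqc u u' -> eqc (t ++ u) (t' ++ u').
Proof. by move=> h1 h2 e; rewrite !coefs_cat h1 h2. Qed.

Lemma eqc_flatten_all I (P : pred I) (s : seq I) (f g : I -> tens V) :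
  all P s -> (forall i, P i -> eqc (f i) (g i)) ->
  eqc (flatten (map f s)) (flatten (map g s)).
Proof.
move=> hs h; elim: s hs => //= i s IH /andP [hi hs].
by apply: eqc_cat; [apply: h | apply: IH].
Qed.

Lemma eqc_flatten I (s : seq I) (f g : I -> tens V) :
  (forall i, eqc (f i) (g i)) -> eqc (flatten (map f s)) (flatten (map g s)).
Proof. by move=> h; apply: (eqc_flatten_all (all_predT s)). Qed.

Section AdditiveSums.
Variables (W : zmodType) (F : seq nat -> V -> W).
Hypothesis F_add : forall e, {morph F e : x y / x + y}.

Let F0 e : F e 0 = 0.
Proof. by apply: (@addrI _ (F e 0)); rewrite -F_add !addr0. Qed.

Lemma big_tens_supp t (S : seq (seq nat)) : uniq S -> {subset map fst t <= S} ->
  \sum_(p <- t) F p.1 p.2 = \sum_(e <- S) F e (coefs t e).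
Proof.
move=> uS; elim: t => [|p t IH] hsub.
  by rewrite big_nil big1 // => e _; rewrite /coefs big_nil F0.
rewrite big_cons IH => [|x hx]; last by apply: hsub; rewrite inE hx orbT.
have hp : p.1 \in S by apply: hsub; rewrite inE eqxx.
rewrite (bigD1_seq p.1) //= [RHS](bigD1_seq p.1) //= /coefs big_cons eqxx F_add addrA.
congr (_ + _); apply: eq_bigr => e /negbTE he.
by rewrite big_cons eq_sym he.
Qed.

Lemma eqc_big t u : eqc t u -> \sum_(p <- t) F p.1 p.2 = \sum_(p <- u) F p.1 p.2.
Proof.
move=> h; pose S := undup (map fst (t ++ u)).
have supp w : {subset map fst w <= map fst (t ++ u)} -> {subset map fst w <= S}.
  by move=> hw x /hw; rewrite mem_undup.
rewrite !(big_tens_supp (S := S)) ?undup_uniq //; last 2 first.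
- by apply: supp => x; rewrite map_cat mem_cat orbC => ->.
- by apply: supp => x; rewrite map_cat mem_cat => ->.
by apply: eq_bigr => e _; rewrite h.
Qed.
End AdditiveSums.

Lemma eqc_remap (g : seq nat -> seq nat) t u :
  eqc t u -> eqc [seq (g p.1, p.2) | p <- t] [seq (g p.1, p.2) | p <- u].
Proof.
move=> h e; rewrite !coefsE !big_map.
apply: (eqc_big (F := fun f x => if g f == e then x else 0)) => // f x y.
by case: ifP; rewrite ?addr0.
Qed.

Lemma coefs_remap (g : seq nat -> seq nat) t (e e' : seq nat) :
  (forall p, p \in t -> (g p.1 == e) = (p.1 == e')) ->
  coefs [seq (g p.1, p.2) | p <- t] e = coefs t e'.
Proof. by move=> h; rewrite !coefsE big_map big_seq [RHS]big_seq; apply: eq_bigr => p /h ->. Qed.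

Lemma coefs_tscale c t e : coefs (tscale c t) e = c *: coefs t e.
Proof.
rewrite !coefsE big_map scaler_sumr; apply: eq_bigr => p _ /=.
by case: ifP; rewrite ?scaler0.
Qed.

End Coefficients.

Lemma eqc_pointwise (k : fieldType) (V W : lmodType k) (f : seq nat -> V -> tens W) (t u : tens V) :
  (forall e x y, eqc (f e (x + y)) (f e x ++ f e y)) -> eqc t u ->
  eqc (flatten [seq f p.1 p.2 | p <- t]) (flatten [seq f p.1 p.2 | p <- u]).
Proof.
move=> hD h e'; rewrite !coefs_flatten !big_map.
by apply: (eqc_big (F := fun e x => coefs (f e x) e')) => // e x y; rewrite hD coefs_cat.
Qed.

Section TensorProduct.
Variables (k : fieldType) (V : lmodType k).
Implicit Types (P : tens k^o) (Q : tens V).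

Definition tprod P Q : tens V := [seq (p.1 ++ q.1, p.2 *: q.2) | p <- P, q <- Q].

Lemma coefs_tprod P Q e : coefs (tprod P Q) e =
  \sum_(p <- P) \sum_(q <- Q) (if p.1 ++ q.1 == e then p.2 *: q.2 else 0).
Proof. by rewrite coefsE /tprod big_allpairs_dep. Qed.

Lemma tprod_eqcr P Q Q' : eqc Q Q' -> eqc (tprod P Q) (tprod P Q').
Proof.
move=> h e; rewrite !coefs_tprod; apply: eq_bigr => p _.
apply: (eqc_big (F := fun f x => if p.1 ++ f == e then p.2 *: x else 0)) => // f x y.
by case: ifP; rewrite ?scalerDr ?addr0.
Qed.

Lemma tprod_eqcl P P' Q : eqc P P' -> eqc (tprod P Q) (tprod P' Q).
Proof.
move=> h e; rewrite !coefs_tprod.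
apply: (eqc_big (F := fun f (x : k^o) =>
  \sum_(q <- Q) if f ++ q.1 == e then x *: q.2 else 0)) => // f x y.
by rewrite -big_split; apply: eq_bigr => q _ /=; case: ifP; rewrite ?scalerDl ?addr0.
Qed.

Lemma tprod_flattenl (Ps : seq (tens k^o)) Q :
  eqc (tprod (flatten Ps) Q) (flatten (map (tprod^~ Q) Ps)).
Proof.
move=> e; rewrite coefs_tprod coefs_flatten big_map big_flatten /=.
by apply: eq_bigr => P _; rewrite coefs_tprod.
Qed.

Lemma tprod_flattenr P (Qs : seq (tens V)) :
  eqc (tprod P (flatten Qs)) (flatten (map (tprod P) Qs)).
Proof.
move=> e; rewrite coefs_tprod coefs_flatten big_map.
rewrite (eq_bigr (fun p => \sum_(Q <- Qs) \sum_(q <- Q)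
    (if p.1 ++ q.1 == e then p.2 *: q.2 else 0))) => [|p _]; last by rewrite big_flatten.
by rewrite exchange_big; apply: eq_bigr => Q _; rewrite coefs_tprod.
Qed.

Lemma coefs_actD Q e : coefs (actD Q) e =
  \sum_(q <- Q) \sum_(i <- iota 0 (size q.1)) (if incr_nth q.1 i == e then q.2 else 0).
Proof. by rewrite coefs_flatten big_map; apply: eq_bigr => q _; rewrite coefsE big_map. Qed.

Lemma actD_eqc Q Q' : eqc Q Q' -> eqc (actD Q) (actD Q').
Proof.
apply: (eqc_pointwise (f := fun e x => [seq (incr_nth e i, x) | i <- iota 0 (size e)])).
move=> e x y e'.
rewrite coefs_cat !coefsE !big_map -big_split; apply: eq_bigr => i _ /=.
by case: ifP; rewrite ?addr0.
Qed.

Lemma actD_cat Q Q' : actD (Q ++ Q') = actD Q ++ actD Q'.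
Proof. by rewrite /actD map_cat flatten_cat. Qed.

Lemma actD_flatten (Qs : seq (tens V)) : actD (flatten Qs) = flatten (map (@actD k V) Qs).
Proof. by elim: Qs => //= Q Qs IH; rewrite actD_cat IH. Qed.

Lemma incr_nth_catl (p q : seq nat) i : (i < size p)%N ->
  incr_nth (p ++ q) i = incr_nth p i ++ q.
Proof. by elim: p i => [|x p IH] [|i] //= h; rewrite IH. Qed.

Lemma incr_nth_catr (p q : seq nat) i : incr_nth (p ++ q) (size p + i) = p ++ incr_nth q i.
Proof. by elim: p => //= x p ->. Qed.

(* [D] acts on [H^{(x)m}] through [Delta(D) = D (x) 1 + 1 (x) D]. *)
Lemma actD_tprod P Q : eqc (actD (tprod P Q)) (tprod (actD P) Q ++ tprod P (actD Q)).
Proof.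
move=> e; rewrite coefs_cat coefs_actD !coefs_tprod /tprod big_allpairs_dep /=.
rewrite /actD big_flatten /= big_map -big_split /=; apply: eq_bigr => p _.
rewrite big_map exchange_big /= big_flatten /= big_map -big_split; apply: eq_bigr => q _ /=.
rewrite big_map size_cat iotaD big_cat /=; congr (_ + _).
- rewrite big_seq_cond [RHS]big_seq_cond; apply: eq_bigr => i.
  by rewrite andbT mem_iota /= => hi; rewrite incr_nth_catl.
- rewrite add0n -[X in iota X](addn0 (size p.1)) iotaDl big_map /=.
  by apply: eq_bigr => i _; rewrite incr_nth_catr.
Qed.

End TensorProduct.

Lemma tprodA (k : fieldType) (V : lmodType k) (P P' : tens k^o) (Q : tens V) :
  eqc (tprod P (tprod P' Q)) (tprod (tprod P P') Q).
Proof.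
move=> e; rewrite !coefs_tprod /tprod big_allpairs_dep /=.
apply: eq_bigr => p _; rewrite big_allpairs_dep /=.
by apply: eq_bigr => p' _; apply: eq_bigr => q _; rewrite catA scalerA.
Qed.

Lemma flatten_map_flatten (A B : Type) (g : A -> seq B) (L : seq (seq A)) :
  flatten (map g (flatten L)) = flatten (map (fun l => flatten (map g l)) L).
Proof. by elim: L => //= l L IH; rewrite map_cat flatten_cat IH. Qed.

Section Expansion.
Variable k : fieldType.
Implicit Types (Gs : seq (seq (k * seq nat))) (e : seq nat).

Definition htens (G : seq (k * seq nat)) : tens k^o := [seq (p.2, p.1) | p <- G].

(* [expand Gs] is
     [F (x) c |-> (G_1 (x) ... (x) G_n) (Delta^{(m_1)} (x) ... (x) Delta^{(m_n)})(F) (x) c],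
   and [expand_mon Gs e = G_1 Delta^{(m_1)}(D^{e_1}) (x) ... (x) G_n Delta^{(m_n)}(D^{e_n})] is the
   image of the monomial [D^{e_1} (x) ... (x) D^{e_n}]. *)
Fixpoint expand_mon Gs e : tens k^o :=
  if Gs is G :: Gs' then
    tprod (iter (head 0%N e) (@actD k k^o) (htens G)) (expand_mon Gs' (behead e))
  else [:: ([::], 1)].

Definition tvec (V : lmodType k) (P : tens k^o) (c : V) : tens V :=
  [seq (f.1, f.2 *: c) | f <- P].

Definition expand (V : lmodType k) Gs (t : tens V) : tens V :=
  flatten [seq tvec (expand_mon Gs p.1) p.2 | p <- t].

Lemma coefs_tvec (V : lmodType k) (P : tens k^o) (c : V) e :
  coefs (tvec P c) e = coefs P e *: c.
Proof.
rewrite !coefsE big_map scaler_suml; apply: eq_bigr => f _.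
by case: ifP; rewrite ?scale0r.
Qed.

Lemma tvec_eqc (V : lmodType k) (P P' : tens k^o) (c : V) :
  eqc P P' -> eqc (tvec P c) (tvec P' c).
Proof. by move=> h e; rewrite !coefs_tvec h. Qed.

Lemma tvec_flatten (V : lmodType k) (Ps : seq (tens k^o)) (c : V) :
  tvec (flatten Ps) c = flatten [seq tvec P c | P <- Ps].
Proof. by elim: Ps => //= P Ps IH; rewrite /tvec map_cat -IH. Qed.

Lemma actD_tvec (V : lmodType k) (P : tens k^o) (c : V) : actD (tvec P c) = tvec (actD P) c.
Proof.
rewrite /actD /tvec map_flatten -!map_comp; congr flatten; apply: eq_map => f /=.
by rewrite -map_comp.
Qed.

Lemma coefs_expand (V : lmodType k) Gs (t : tens V) e :
  coefs (expand Gs t) e = \sum_(p <- t) coefs (expand_mon Gs p.1) e *: p.2.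
Proof. by rewrite coefs_flatten big_map; apply: eq_bigr => p _; rewrite coefs_tvec. Qed.

Lemma expand_eqc (V : lmodType k) Gs (t u : tens V) : eqc t u -> eqc (expand Gs t) (expand Gs u).
Proof.
apply: (eqc_pointwise (f := fun e x => tvec (expand_mon Gs e) x)) => e x y e'.
by rewrite coefs_cat !coefs_tvec scalerDr.
Qed.

Lemma expand_cat (V : lmodType k) Gs (t u : tens V) :
  expand Gs (t ++ u) = expand Gs t ++ expand Gs u.
Proof. by rewrite /expand map_cat flatten_cat. Qed.

Lemma expand_flatten (V : lmodType k) Gs (ts : seq (tens V)) :
  expand Gs (flatten ts) = flatten (map (expand Gs) ts).
Proof. by elim: ts => //= t ts IH; rewrite expand_cat IH. Qed.

Lemma expand_tscale (V : lmodType k) Gs c (t : tens V) :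
  eqc (expand Gs (tscale c t)) (tscale c (expand Gs t)).
Proof.
move=> e; rewrite coefs_tscale !coefs_expand big_map scaler_sumr.
by apply: eq_bigr => p _ /=; rewrite !scalerA mulrC.
Qed.

Lemma expand_mon_cat Gs Gs' e e' : size e = size Gs ->
  eqc (expand_mon (Gs ++ Gs') (e ++ e')) (tprod (expand_mon Gs e) (expand_mon Gs' e')).
Proof.
elim: Gs e => [|G Gs IH] [|e0 e] //= => [_ u|[he]].
  rewrite coefs_tprod big_cons big_nil addr0 coefsE.
  by apply: eq_bigr => q _; rewrite scale1r.
exact: eqc_trans (tprod_eqcr _ (IH _ he)) (tprodA _ _ _).
Qed.

Lemma expand_mon_actD Gs e : size e = size Gs ->
  eqc (actD (expand_mon Gs e)) (flatten [seq expand_mon Gs (incr_nth e i) | i <- iota 0 (size e)]).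
Proof.
elim: Gs e => [|G Gs IH] [|e0 e] //= [he].
apply: eqc_trans (actD_tprod _ _) _; apply: eqc_cat => //.
apply: eqc_trans (tprod_eqcr _ (IH _ he)) _.
apply: eqc_trans (tprod_flattenr _ _) _.
by rewrite [iota 1 _](iotaDl 1 0) -!map_comp.
Qed.

(* [dexps s v] lists, with multiplicity, the exponent vectors of the monomials of
   [(x_1 + ... + x_m)^s x^v]. *)
Definition incr_each (L : seq (seq nat)) : seq (seq nat) :=
  flatten [seq [seq incr_nth w i | i <- iota 0 (size w)] | w <- L].
Definition dexps s (v : seq nat) := iter s incr_each [:: v].

Lemma size_dexps s v : all (fun h => size h == size v) (dexps s v).
Proof.
apply/allP; elim: s => [|s IH] h /=; first by rewrite inE => /eqP ->.
move=> /flattenP [l /mapP [w hw ->]] /mapP [i]; rewrite mem_iota add0n => /andP [_ hi] ->.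
by rewrite size_incr_nth hi IH.
Qed.

Lemma iter_actD_dexps (V : lmodType k) (P : tens V) s :
  iter s (@actD k V) P = flatten [seq [seq (h, f.2) | h <- dexps s f.1] | f <- P].
Proof.
elim: s => [|s IH] /=; first by elim: P => //= -[x y] P <-.
rewrite IH actD_flatten -map_comp; congr flatten; apply: eq_map => f /=.
rewrite /actD /incr_each map_flatten -!map_comp; congr flatten; apply: eq_map => w /=.
by rewrite -map_comp.
Qed.

Lemma expand_mon_iter_actD Gs e s : size e = size Gs ->
  eqc (iter s (@actD k k^o) (expand_mon Gs e)) (flatten [seq expand_mon Gs h | h <- dexps s e]).
Proof.
move=> he; elim: s => [|s IH] /=; first by move=> u; rewrite /= cats0.
apply: eqc_trans (actD_eqc IH) _.
rewrite actD_flatten -map_comp /incr_each flatten_map_flatten -map_comp.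
apply: (eqc_flatten_all (size_dexps s e)) => h /eqP hh /=.
by rewrite -map_comp; apply: expand_mon_actD; rewrite hh.
Qed.

Lemma expand_actD (V : lmodType k) Gs (t : tens V) :
  all (fun p => size p.1 == size Gs) t -> eqc (actD (expand Gs t)) (expand Gs (actD t)).
Proof.
move=> ht; rewrite /expand actD_flatten [actD t]/actD flatten_map_flatten -!map_comp.
apply: (eqc_flatten_all ht) => p /eqP hp /=.
rewrite actD_tvec -map_comp.
rewrite (map_comp (fun P => tvec P p.2) (fun i => expand_mon Gs (incr_nth p.1 i))).
by rewrite -tvec_flatten; apply/tvec_eqc/expand_mon_actD.
Qed.

End Expansion.

Section Pseudoproduct.
Variables (k : fieldType) (C : lmodType k) (cs : @conformal k C).

Definition cprodl n b a := cprod cs n a b.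
Definition cprodr n a b := cprod cs n a b.
HB.instance Definition _ n b :=
  GRing.isLinear.Build k C C *:%R (cprodl n b) (cprod_linl cs n b).
HB.instance Definition _ n a :=
  GRing.isLinear.Build k C C *:%R (cprodr n a) (cprod_linr cs n a).

Lemma cprod_addl n x y b : cprod cs n (x + y) b = cprod cs n x b + cprod cs n y b.
Proof. exact: (raddfD (cprodl n b)). Qed.

Lemma cprod_addr n a x y : cprod cs n a (x + y) = cprod cs n a x + cprod cs n a y.
Proof. exact: (raddfD (cprodr n a)). Qed.

Lemma cprod_scalel n c x b : cprod cs n (c *: x) b = c *: cprod cs n x b.
Proof. exact: (linearZZ (cprodl n b)). Qed.

Lemma cprod_scaler n c a x : cprod cs n a (c *: x) = c *: cprod cs n a x.
Proof. exact: (linearZZ (cprodr n a)). Qed.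

Lemma cbound_spec a b n : (cbound cs a b <= n)%N -> cprod cs n a b = 0.
Proof. by rewrite /cbound; case: constructive_indefinite_description => N hN /=; apply: hN. Qed.

(* By locality, [csum g a b] is the (finite) sum of [g s (a_(s) b)] over all [s]. *)
Definition csum (W : zmodType) (g : nat -> C -> W) a b : W :=
  \sum_(s <- iota 0 (cbound cs a b)) g s (cprod cs s a b).

Section AdditiveIntegrand.
Variables (W : zmodType) (g : nat -> C -> W).
Hypothesis g_add : forall s, {morph g s : x y / x + y}.

Let g0 s : g s 0 = 0.
Proof. by apply: (@addrI _ (g s 0)); rewrite -g_add !addr0. Qed.

Lemma csum_widen a b N : (cbound cs a b <= N)%N ->
  csum g a b = \sum_(s <- iota 0 N) g s (cprod cs s a b).
Proof.
move=> hN; rewrite /csum -(subnKC hN) iotaD big_cat /= add0n.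
rewrite [X in _ = _ + X]big1_seq ?addr0 // => s /andP [_]; rewrite mem_iota => /andP [h _].
by rewrite cbound_spec // g0.
Qed.

Lemma csum_addl x y b : csum g (x + y) b = csum g x b + csum g y b.
Proof.
pose N := (cbound cs (x + y) b + cbound cs x b + cbound cs y b)%N.
rewrite !(@csum_widen _ _ N) /N; try lia.
by rewrite -big_split; apply: eq_bigr => s _; rewrite cprod_addl g_add.
Qed.

Lemma csum_addr a x y : csum g a (x + y) = csum g a x + csum g a y.
Proof.
pose N := (cbound cs a (x + y) + cbound cs a x + cbound cs a y)%N.
rewrite !(@csum_widen _ _ N) /N; try lia.
by rewrite -big_split; apply: eq_bigr => s _; rewrite cprod_addr g_add.
Qed.
End AdditiveIntegrand.

Lemma csum_scale (W : zmodType) (g : nat -> C -> W) c d x y :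
  (forall s, {morph g s : z z' / z + z'}) ->
  csum g (c *: x) (d *: y) = csum (fun s z => g s ((c * d) *: z)) x y.
Proof.
move=> g_add.
have gZ_add s : {morph (fun z => g s ((c * d) *: z)) : z z' / z + z'}.
  by move=> z z' /=; rewrite scalerDr g_add.
pose N := (cbound cs (c *: x) (d *: y) + cbound cs x y)%N.
rewrite (@csum_widen _ _ g_add _ _ N) ?(@csum_widen _ (fun s z => g s ((c * d) *: z)) gZ_add _ _ N);
  rewrite /N; try lia.
by apply: eq_bigr => s _; rewrite cprod_scalel cprod_scaler scalerA mulrC.
Qed.

Definition dcoef s : k := (s`!%:R)^-1 * (-1) ^+ s.

Lemma act_hs_single s v (x : C) :
  act_hs s [:: (v, x)] = [seq (h, dcoef s *: x) | h <- dexps s v].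
Proof. by rewrite /act_hs iter_actD_dexps /= cats0 -map_comp. Qed.

Lemma big_pprod (W : zmodType) (F : seq nat -> C -> W) (A B : tens C) :
  \sum_(P <- pprod cs A B) F P.1 P.2 = \sum_(p <- A) \sum_(q <- B)
    csum (fun s z => \sum_(h <- dexps s p.1) F (h ++ q.1) (dcoef s *: z)) p.2 q.2.
Proof.
rewrite /pprod big_flatten /= big_flatten /= big_allpairs_dep /=.
apply: eq_bigr => p _; apply: eq_bigr => q _; rewrite big_map.
by apply: eq_bigr => s _; rewrite act_hs_single -map_comp big_map.
Qed.

Definition pterm e (v w : seq nat) s (z : C) :=
  \sum_(h <- dexps s v) (if h ++ w == e then dcoef s *: z else 0).

Lemma pterm_add e v w s : {morph pterm e v w s : x y / x + y}.
Proof.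
move=> x y; rewrite -big_split; apply: eq_bigr => h _ /=.
by case: ifP; rewrite ?scalerDr ?addr0.
Qed.

Lemma coefs_pprod (A B : tens C) e :
  coefs (pprod cs A B) e = \sum_(p <- A) \sum_(q <- B) csum (pterm e p.1 q.1) p.2 q.2.
Proof. by rewrite coefsE (big_pprod (fun f x => if f == e then x else 0)). Qed.

Lemma pprod_eqcl (A A' B : tens C) : eqc A A' -> eqc (pprod cs A B) (pprod cs A' B).
Proof.
move=> h e; rewrite !coefs_pprod.
apply: (eqc_big (F := fun v x => \sum_(q <- B) csum (pterm e v q.1) x q.2)) => // v x y.
by rewrite -big_split; apply: eq_bigr => q _; apply/csum_addl/pterm_add.
Qed.

Lemma pprod_eqcr (A B B' : tens C) : eqc B B' -> eqc (pprod cs A B) (pprod cs A B').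
Proof.
move=> h e; rewrite !coefs_pprod exchange_big [RHS]exchange_big /=.
apply: (eqc_big (F := fun w y => \sum_(p <- A) csum (pterm e p.1 w) p.2 y)) => // w x y.
by rewrite -big_split; apply: eq_bigr => p _; apply/csum_addr/pterm_add.
Qed.

End Pseudoproduct.

Section ExpandPseudoproduct.
Variables (k : fieldType) (C : lmodType k) (cs : @conformal k C).
Implicit Types (Gs : seq (seq (k * seq nat))) (X Y : tens C).

Definition expand_term Gs1 Gs2 u (v w : seq nat) s (z : C) : C :=
  coefs (tprod (iter s (@actD k k^o) (expand_mon Gs1 v)) (expand_mon Gs2 w)) u *: (dcoef k s *: z).

Lemma big_pterm_expand Gs1 Gs2 u v w s z :
  \sum_(f <- expand_mon Gs1 v) \sum_(g <- expand_mon Gs2 w) pterm u f.1 g.1 s ((f.2 * g.2) *: z)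
  = expand_term Gs1 Gs2 u v w s z.
Proof.
rewrite /expand_term coefs_tprod iter_actD_dexps big_flatten big_map scaler_suml.
apply: eq_bigr => f _; rewrite big_map exchange_big scaler_suml; apply: eq_bigr => h _.
rewrite scaler_suml; apply: eq_bigr => g _.
by case: ifP; rewrite ?scale0r // !scalerA mulrC.
Qed.

Lemma coefs_pprod_expand Gs1 Gs2 X Y u :
  coefs (pprod cs (expand Gs1 X) (expand Gs2 Y)) u =
  \sum_(p <- X) \sum_(q <- Y) csum cs (expand_term Gs1 Gs2 u p.1 q.1) p.2 q.2.
Proof.
rewrite coefs_pprod /expand big_flatten big_map; apply: eq_bigr => p _.
rewrite big_map exchange_big big_flatten big_map; apply: eq_bigr => q _ /=.
rewrite big_map exchange_big /=.
under eq_bigr do under eq_bigr do rewrite (csum_scale _ _ _ _ _ (pterm_add _ _ _)).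
rewrite /csum; under eq_bigr do rewrite exchange_big /=.
by rewrite exchange_big; apply: eq_bigr => s _; rewrite big_pterm_expand.
Qed.

Lemma coefs_expand_pprod Gs1 Gs2 X Y u : all (fun p => size p.1 == size Gs1) X ->
  coefs (expand (Gs1 ++ Gs2) (pprod cs X Y)) u =
  \sum_(p <- X) \sum_(q <- Y) csum cs (expand_term Gs1 Gs2 u p.1 q.1) p.2 q.2.
Proof.
move=> /allP hX.
rewrite coefs_expand (big_pprod cs (fun e x => coefs (expand_mon (Gs1 ++ Gs2) e) u *: x)).
apply: eq_big_seq => p /hX /eqP hp; apply: eq_bigr => q _.
rewrite /csum; apply: eq_bigr => s _; rewrite /expand_term -scaler_suml; congr (_ *: _).
transitivity (coefs (flatten
    [seq tprod (expand_mon Gs1 h) (expand_mon Gs2 q.1) | h <- dexps s p.1]) u).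
  rewrite coefs_flatten big_map; apply: (eq_big_seq) => h /(allP (size_dexps s p.1)) /eqP hh.
  by rewrite expand_mon_cat // hh hp.
rewrite (map_comp (fun P => tprod P (expand_mon Gs2 q.1)) (expand_mon Gs1)).
rewrite -tprod_flattenl.
by rewrite (tprod_eqcl _ (expand_mon_iter_actD s hp)).
Qed.

Lemma expand_pprod Gs1 Gs2 X Y : all (fun p => size p.1 == size Gs1) X ->
  eqc (pprod cs (expand Gs1 X) (expand Gs2 Y)) (expand (Gs1 ++ Gs2) (pprod cs X Y)).
Proof. by move=> hX u; rewrite coefs_pprod_expand coefs_expand_pprod. Qed.

End ExpandPseudoproduct.

Section Bracketings.
Variables (k : fieldType) (C : lmodType k) (cs : @conformal k C).

Lemma pprod_mem (A B : tens C) P : P \in pprod cs A B ->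
  exists p q s h, [/\ p \in A, q \in B, h \in dexps s p.1 & P.1 = h ++ q.1].
Proof.
move=> /flattenP [L /flattenP [L' /allpairsP [[p q] [hp hq ->]]]] /=.
move=> /mapP [s _ ->] /mapP [r]; rewrite act_hs_single => /mapP [h hh ->] -> /=.
by exists p, q, s, h.
Qed.

Lemma size_teval T (xs : seq C) : size xs = leaves T ->
  all (fun p => size p.1 == leaves T) (teval cs T (map (@elt k C) xs)).
Proof.
elim: T xs => [|l IHl r IHr] xs /=; first by case: xs => [|c [|]] //= _; rewrite andbT.
move=> hs; apply/allP => P /pprod_mem [p [q [s [h [hp hq hh ->]]]]].
rewrite -map_take -map_drop in hp hq.
have hl : size (take (leaves l) xs) = leaves l by rewrite size_takel // hs leq_addr.
have hr : size (drop (leaves l) xs) = leaves r by rewrite size_drop hs addKn.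
move: (allP (IHl _ hl) _ hp) (allP (IHr _ hr) _ hq) (allP (size_dexps s p.1) _ hh).
by move=> /eqP h1 /eqP h2 /eqP h3; rewrite size_cat h3 h1 h2.
Qed.

Lemma teval_gtens T (Ga : seq (seq (k * seq nat) * C)) : size Ga = leaves T ->
  eqc (teval cs T [seq gtens x.1 x.2 | x <- Ga])
      (expand (map fst Ga) (teval cs T [seq elt x.2 | x <- Ga])).
Proof.
elim: T Ga => [|l IHl r IHr] Ga /=.
  case: Ga => [|[G a] [|]] //= _ u.
  rewrite coefs_expand /elt big_cons big_nil addr0 /= coefs_tprod /htens big_map coefsE big_map.
  rewrite scaler_suml; apply: eq_bigr => p _ /=.
  rewrite big_cons big_nil addr0 cats0; case: ifP => _; rewrite ?scale0r //=.
  by congr (_ *: _); symmetry; exact: mulr1.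
move=> hs; rewrite -!map_take -!map_drop.
have hl : size (take (leaves l) Ga) = leaves l by rewrite size_takel // hs leq_addr.
have hr : size (drop (leaves l) Ga) = leaves r by rewrite size_drop hs addKn.
apply: eqc_trans (pprod_eqcl _ _ (IHl _ hl)) _.
apply: eqc_trans (pprod_eqcr _ _ (IHr _ hr)) _.
rewrite -[map fst Ga](cat_take_drop (leaves l)) -map_take -map_drop.
apply: expand_pprod; rewrite size_map hl.
by have := @size_teval l (map snd (take (leaves l) Ga)); rewrite size_map -map_comp; apply.
Qed.

End Bracketings.

Lemma blocksE (ls e : seq nat) : blocks ls e = reshape ls e.
Proof. by elim: ls e => //= l ls IH e; rewrite IH. Qed.

Lemma size_nth_reshape (ls u : seq nat) i : size u = sumn ls ->
  size (nth [::] (reshape ls u) i) = nth 0%N ls i.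
Proof. by move=> h; rewrite -nth_shape reshapeKl // h. Qed.

Lemma nth_enum_map (T : Type) n (x0 : T) (f : 'I_n -> T) (i : 'I_n) :
  nth x0 [seq f j | j <- enum 'I_n] i = f i.
Proof. by rewrite (nth_map i) ?size_enum_ord // nth_ord_enum. Qed.

Lemma map_nth_enum (T : Type) (x0 : T) (s : seq T) n : size s = n ->
  [seq nth x0 s (nat_of_ord j) | j <- enum 'I_n] = s.
Proof.
move=> <-; rewrite (map_comp (nth x0 s) (@nat_of_ord _)) val_enum_ord.
by rewrite -/(mkseq _ _) mkseq_nth.
Qed.

Section BlockPermutation.
Variable n : nat.
Implicit Types (s : 'S_n) (l : 'I_n -> nat) (v : seq nat).

Definition block_perm s (ls : seq nat) v : seq nat :=
  flatten [seq nth [::] (reshape ls v) ((s^-1)%g j) | j <- enum 'I_n].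

Lemma act_sigma_piE (C : Type) (m : 'I_n -> nat) s (t : tens C) :
  act_sigma_pi m s t = [seq (block_perm s [seq m (s i) | i <- enum 'I_n] p.1, p.2) | p <- t].
Proof. by apply: eq_map => p; rewrite blocksE. Qed.

Lemma shape_block_perm s l v : size v = sumn [seq l i | i <- enum 'I_n] ->
  shape [seq nth [::] (reshape [seq l i | i <- enum 'I_n] v) ((s^-1)%g j) | j <- enum 'I_n]
  = [seq l ((s^-1)%g j) | j <- enum 'I_n].
Proof.
move=> hv; rewrite /shape -map_comp; apply: eq_map => j /=.
by rewrite size_nth_reshape // nth_enum_map.
Qed.

Lemma reshape_block_perm s l v : size v = sumn [seq l i | i <- enum 'I_n] ->
  reshape [seq l ((s^-1)%g j) | j <- enum 'I_n] (block_perm s [seq l i | i <- enum 'I_n] v)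
  = [seq nth [::] (reshape [seq l i | i <- enum 'I_n] v) ((s^-1)%g j) | j <- enum 'I_n].
Proof. by move=> hv; rewrite /block_perm -(shape_block_perm s hv) flattenK. Qed.

Lemma size_block_perm s l v : size v = sumn [seq l i | i <- enum 'I_n] ->
  size (block_perm s [seq l i | i <- enum 'I_n] v) = sumn [seq l ((s^-1)%g j) | j <- enum 'I_n].
Proof. by move=> hv; rewrite /block_perm size_flatten (shape_block_perm s hv). Qed.

Lemma block_permK s l v : size v = sumn [seq l i | i <- enum 'I_n] ->
  block_perm (s^-1)%g [seq l ((s^-1)%g j) | j <- enum 'I_n]
    (block_perm s [seq l i | i <- enum 'I_n] v) = v.
Proof.
move=> hv; rewrite {1}/block_perm reshape_block_perm //.
under eq_map do rewrite nth_enum_map invgK permK.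
by rewrite map_nth_enum ?reshapeKr ?hv // size_reshape size_map size_enum_ord.
Qed.

End BlockPermutation.

Section PermutationActions.
Variables (C : Type) (n : nat) (s : 'S_n) (m : 'I_n -> nat).
Implicit Types (X : tens C) (Xs : seq (tens C)).

Lemma act_sigma_pi_flatten Xs : act_sigma_pi m s (flatten Xs) = flatten (map (act_sigma_pi m s) Xs).
Proof. exact: map_flatten. Qed.

Lemma act_perm_flatten Xs : act_perm s (flatten Xs) = flatten (map (act_perm s) Xs).
Proof. exact: map_flatten. Qed.

End PermutationActions.

Lemma act_sigma_pi_tscale (k : fieldType) (V : lmodType k) n (s : 'S_n) m c (X : tens V) :
  act_sigma_pi m s (tscale c X) = tscale c (act_sigma_pi m s X).
Proof. by rewrite /act_sigma_pi /tscale -!map_comp. Qed.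

Lemma act_perm_tscale (k : fieldType) (V : lmodType k) n (s : 'S_n) c (X : tens V) :
  act_perm s (tscale c X) = tscale c (act_perm s X).
Proof. by rewrite /act_perm /tscale -!map_comp. Qed.

Lemma act_sigma_pi_eqc (k : fieldType) (V : lmodType k) n (s : 'S_n) m (X Y : tens V) :
  eqc X Y -> eqc (act_sigma_pi m s X) (act_sigma_pi m s Y).
Proof. by rewrite !act_sigma_piE; apply: eqc_remap. Qed.

Section ExpandPermutation.
Variable k : fieldType.
Implicit Types (Gs : seq (seq (k * seq nat))) (ls e u : seq nat).

Definition has_arities Gs ls := all2 (fun G l => all (fun p => size p.2 == l) G) Gs ls.

Lemma has_arities_enum n (G : 'I_n -> seq (k * seq nat)) (l : 'I_n -> nat) :
  (forall i, all (fun p => size p.2 == l i) (G i)) ->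
  has_arities [seq G i | i <- enum 'I_n] [seq l i | i <- enum 'I_n].
Proof. by move=> h; rewrite /has_arities; elim: (enum 'I_n) => //= i s ->; rewrite h. Qed.

Lemma size_iter_actD (V : lmodType k) (P : tens V) l s :
  all (fun p => size p.1 == l) P -> all (fun p => size p.1 == l) (iter s (@actD k V) P).
Proof.
move=> /allP hP; rewrite iter_actD_dexps; apply/allP => x /flattenP [L /mapP [f hf ->]].
by move=> /mapP [h hh ->] /=; rewrite (eqP (allP (size_dexps s f.1) _ hh)); apply: hP.
Qed.

Lemma size_expand_mon Gs ls e : has_arities Gs ls ->
  all (fun f => size f.1 == sumn ls) (expand_mon Gs e).
Proof.
elim: Gs ls e => [|G Gs IH] [|l ls] e //= /andP [hG hGs].
apply/allP => x /allpairsP [[f g] [hf hg ->]] /=.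
have hG' : all (fun p => size p.1 == l) (htens G) by rewrite /htens all_map.
rewrite size_cat (eqP (allP (size_iter_actD (head 0%N e) hG') _ hf)).
by rewrite (eqP (allP (IH _ (behead e) hGs) _ hg)).
Qed.

Lemma coefs_tprod_size (V : lmodType k) (P : tens k^o) (Q : tens V) l1 l2 u :
  all (fun p => size p.1 == l1) P -> all (fun q => size q.1 == l2) Q ->
  coefs (tprod P Q) u =
  if size u == (l1 + l2)%N then coefs P (take l1 u) *: coefs Q (drop l1 u) else 0.
Proof.
move=> /allP hP /allP hQ; rewrite coefs_tprod; case: eqP => hu.
- rewrite !coefsE scaler_suml; apply: eq_big_seq => p hp.
  rewrite scaler_sumr; apply: eq_big_seq => q hq.
  have hp1 : size p.1 = size (take l1 u) by rewrite size_takel ?hu ?leq_addr // (eqP (hP _ hp)).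
  rewrite -{1}(cat_take_drop l1 u) eqseq_cat //.
  by case: (p.1 == _); case: (q.1 == _); rewrite /= ?scale0r ?scaler0.
- apply: big1_seq => p /andP [_ hp]; apply: big1_seq => q /andP [_ hq].
  case: eqP => // he; case: hu; rewrite -he size_cat.
  by rewrite (eqP (hP _ hp)) (eqP (hQ _ hq)).
Qed.

Definition block_factor Gs e i : tens k^o :=
  iter (nth 0%N e i) (@actD k k^o) (htens (nth [::] Gs i)).

Lemma coefs_expand_mon Gs ls e u : has_arities Gs ls -> size e = size Gs ->
  coefs (expand_mon Gs e) u =
  if size u == sumn ls then
    \prod_(0 <= i < size Gs) coefs (block_factor Gs e i) (nth [::] (reshape ls u) i)
  else 0.
Proof.
elim: Gs ls e u => [|G Gs IH] [|l ls] [|e0 e] u //=.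
  by move=> _ _; rewrite big_nil coefsE big_cons big_nil addr0; case: u.
move=> /andP [hG hGs] [he].
have hG' : all (fun p => size p.1 == l) (htens G) by rewrite /htens all_map.
rewrite (coefs_tprod_size _ (size_iter_actD _ hG') (size_expand_mon _ hGs)).
by rewrite (IH ls e) // size_drop; case: eqP => // ->; rewrite addKn eqxx big_nat_recl.
Qed.

Section Permuted.
Variables (n : nat) (s : 'S_n) (m : 'I_n -> nat) (G : 'I_n -> seq (k * seq nat)).
Hypothesis hG : forall i, all (fun p => size p.2 == m i) (G i).

Let L := [seq m i | i <- enum 'I_n].
Let Ls := [seq m (s i) | i <- enum 'I_n].

Let arL : has_arities [seq G i | i <- enum 'I_n] L.
Proof. exact: has_arities_enum. Qed.

Let arLs : has_arities [seq G (s i) | i <- enum 'I_n] Ls.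
Proof. exact: (has_arities_enum (G := fun i => G (s i))). Qed.

Let L_perm : [seq m (s ((s^-1)%g j)) | j <- enum 'I_n] = L.
Proof. by apply: eq_map => j; rewrite permKV. Qed.

Let Ls_perm : [seq m ((s^-1)^-1%g j) | j <- enum 'I_n] = Ls.
Proof. by apply: eq_map => j; rewrite invgK. Qed.

Lemma coefs_expand_mon_perm e u : size e = n -> size u = sumn L ->
  coefs (expand_mon [seq G (s i) | i <- enum 'I_n] e) (block_perm (s^-1)%g L u) =
  coefs (expand_mon [seq G i | i <- enum 'I_n] [seq nth 0%N e ((s^-1)%g j) | j <- enum 'I_n]) u.
Proof.
move=> he hu.
have hv : size (block_perm (s^-1)%g L u) = sumn Ls by rewrite -Ls_perm size_block_perm.
rewrite (coefs_expand_mon _ arLs) ?(coefs_expand_mon _ arL) ?size_map -?enumT ?size_enum_ord //.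
rewrite hu hv !eqxx !big_mkord.
rewrite [RHS](reindex_inj (@perm_inj _ s)) /=; apply: eq_bigr => i _.
rewrite /block_factor !nth_enum_map permK -Ls_perm reshape_block_perm //.
by rewrite nth_enum_map invgK.
Qed.

Lemma act_sigma_pi_expand_mon (V : lmodType k) e (c : V) : size e = n ->
  eqc (act_sigma_pi m s (tvec (expand_mon [seq G (s i) | i <- enum 'I_n] e) c))
      (tvec (expand_mon [seq G i | i <- enum 'I_n]
              [seq nth 0%N e ((s^-1)%g j) | j <- enum 'I_n]) c).
Proof.
move=> he u; rewrite act_sigma_piE coefs_tvec.
have sizeP f : f \in tvec (expand_mon [seq G (s i) | i <- enum 'I_n] e) c -> size f.1 = sumn Ls.
  by move=> /mapP [g hg ->]; apply/eqP; apply: (allP (size_expand_mon e arLs)).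
have [hu|hu] := eqVneq (size u) (sumn L).
- rewrite (coefs_remap (e' := block_perm (s^-1)%g L u)) ?coefs_tvec ?coefs_expand_mon_perm //.
  move=> f /sizeP hf; apply/eqP/eqP => [<-|->].
  + by rewrite -L_perm (@block_permK n s (fun i => m (s i)) f.1 hf).
  + by have := block_permK (s^-1)%g hu; rewrite invgK.
rewrite (coefs_expand_mon _ arL) ?size_map ?size_enum_ord // (negbTE hu) scale0r.
rewrite coefsE big_map; apply: big1_seq => f /andP [_ /sizeP hf] /=; case: eqP => // hfu.
by case/eqP: hu; rewrite -hfu -L_perm (@size_block_perm n s (fun i => m (s i)) f.1 hf).
Qed.

Lemma act_sigma_pi_expand (V : lmodType k) (X : tens V) : all (fun p => size p.1 == n) X ->
  eqc (act_sigma_pi m s (expand [seq G (s i) | i <- enum 'I_n] X))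
      (expand [seq G i | i <- enum 'I_n] (act_perm s X)).
Proof.
move=> hX; rewrite /expand act_sigma_pi_flatten /act_perm -(map_comp (act_sigma_pi m s)).
rewrite -(map_comp (fun p : seq nat * V => tvec (expand_mon [seq G i | i <- enum 'I_n] p.1) p.2)).
by apply: (eqc_flatten_all hX) => p /eqP hp /=; apply: act_sigma_pi_expand_mon.
Qed.

End Permuted.
End ExpandPermutation.

Section Relations.
Variables (k : fieldType) (C : lmodType k) (cs : @conformal k C).

Lemma tz_eqc m (X Y : tens C) : eqc X Y -> tz cs m Y -> tz cs m X.
Proof. by move=> h [r [hr hY]]; exists r; split=> //; apply: eqc_trans hY. Qed.

Lemma rel_gen_flatten (r : tens C) :
  eqc (flatten (map (rel_gen cs) r)) (actD r ++ [seq (p.1, - cD cs p.2) | p <- r]).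
Proof.
move=> e; rewrite coefs_flatten big_map coefs_cat coefs_actD coefsE big_map -big_split.
by apply: eq_bigr => p _; rewrite /rel_gen coefs_cat !coefsE big_map big_cons big_nil addr0.
Qed.

(* [expand] is well defined on [H^{(x)n} (x)_H C] because it commutes with the right [D]-action. *)
Lemma expand_rel_gen Gs (r : tens C) : all (fun p => size p.1 == size Gs) r ->
  eqc (expand Gs (flatten (map (rel_gen cs) r))) (flatten (map (rel_gen cs) (expand Gs r))).
Proof.
move=> hr.
apply: eqc_trans (expand_eqc Gs (rel_gen_flatten r)) _.
apply: eqc_trans _ (eqc_sym (rel_gen_flatten _)).
rewrite expand_cat; apply: eqc_cat; first exact: eqc_sym (expand_actD hr).
move=> u; congr (coefs _ u).
rewrite /expand map_flatten -!map_comp; congr flatten; apply: eq_map => p /=.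
by rewrite /tvec -map_comp; apply: eq_map => f /=; rewrite linearZ scalerN.
Qed.

Lemma expand_tz Gs ls (X : tens C) : has_arities Gs ls ->
  tz cs (size Gs) X -> tz cs (sumn ls) (expand Gs X).
Proof.
move=> ar [r [hr hX]]; exists (expand Gs r); split.
  apply/allP => x /flattenP [L /mapP [p hp ->]] /mapP [f hf ->] /=.
  exact: (allP (size_expand_mon p.1 ar)).
exact: eqc_trans (expand_eqc Gs hX) (expand_rel_gen hr).
Qed.

Section Identity.
Variables (n : nat) (s : 'S_n) (m : 'I_n -> nat) (G : 'I_n -> seq (k * seq nat)) (a : 'I_n -> C).
Hypothesis hG : forall i, all (fun p => size p.2 == m i) (G i).

Lemma teval_perm T : leaves T = n ->
  eqc (act_sigma_pi m s (teval cs T [seq gtens (G (s i)) (a (s i)) | i <- enum 'I_n]))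
      (expand [seq G i | i <- enum 'I_n]
         (act_perm s (teval cs T [seq elt (a (s i)) | i <- enum 'I_n]))).
Proof.
move=> hT; pose Ga := [seq (G (s i), a (s i)) | i <- enum 'I_n].
have hGa : size Ga = leaves T by rewrite size_map size_enum_ord hT.
have EG : [seq gtens x.1 x.2 | x <- Ga] = [seq gtens (G (s i)) (a (s i)) | i <- enum 'I_n].
  by rewrite -map_comp.
have Ea : [seq elt x.2 | x <- Ga] = [seq elt (a (s i)) | i <- enum 'I_n] by rewrite -map_comp.
have EGs : map fst Ga = [seq G (s i) | i <- enum 'I_n] by rewrite -map_comp.
have := teval_gtens cs hGa; rewrite EG Ea EGs => /(act_sigma_pi_eqc s m) /eqc_trans; apply.
apply: act_sigma_pi_expand => //.
have := @size_teval k C cs T [seq a (s i) | i <- enum 'I_n].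
by rewrite size_map size_enum_ord hT -(map_comp (@elt k C)); apply.
Qed.

Lemma lceval_perm (L : seq (k * btree)) : all (fun p => leaves p.2 == n) L ->
  eqc (act_sigma_pi m s (lceval cs L [seq gtens (G (s i)) (a (s i)) | i <- enum 'I_n]))
      (expand [seq G i | i <- enum 'I_n]
         (act_perm s (lceval cs L [seq elt (a (s i)) | i <- enum 'I_n]))).
Proof.
move=> hL; rewrite /lceval act_sigma_pi_flatten act_perm_flatten expand_flatten.
rewrite -(map_comp (act_sigma_pi m s)) -(map_comp (act_perm s)) -(map_comp (expand _)).
apply: (eqc_flatten_all hL) => -[c T] /eqP /= hT.
rewrite act_sigma_pi_tscale act_perm_tscale.
apply: eqc_trans _ (eqc_sym (expand_tscale _ _ _)) => e; rewrite !coefs_tscale.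
by rewrite (teval_perm hT).
Qed.

End Identity.
End Relations.

Theorem proposition3p3 (k : fieldType) (hk : [pchar k] =i pred0)
  (C : lmodType k) (cs : @conformal k C) (n : nat)
  (t : 'S_n -> seq (k * btree))
  (ht : forall s : 'S_n, all (fun p => leaves p.2 == n) (t s))
  (hid : forall a : 'I_n -> C,
     tz cs n (flatten [seq act_perm s
                (lceval cs (t s) [seq elt (a (s i)) | i <- enum 'I_n]) | s : 'S_n]))
  (m : 'I_n -> nat) (hm : forall i, (0 < m i)%N)
  (G : 'I_n -> seq (k * seq nat))
  (hG : forall i, all (fun p => size p.2 == m i) (G i))
  (a : 'I_n -> C) :
  let A := fun i => gtens (G i) (a i) in
  tz cs (\sum_(i < n) m i)%N
    (flatten [seq act_sigma_pi m s
                (lceval cs (t s) [seq A (s i) | i <- enum 'I_n]) | s : 'S_n]).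
Proof.
move=> A; pose Gs := [seq G i | i <- enum 'I_n].
have -> : (\sum_(i < n) m i)%N = sumn [seq m i | i <- enum 'I_n].
  by rewrite sumnE big_map big_enum.
apply: (@tz_eqc _ _ _ _ _ (expand Gs (flatten [seq act_perm s
          (lceval cs (t s) [seq elt (a (s i)) | i <- enum 'I_n]) | s : 'S_n]))).
  rewrite expand_flatten -map_comp; apply: eqc_flatten => s.
  exact: (lceval_perm cs s a hG (ht s)).
apply: expand_tz (has_arities_enum hG) _.
by rewrite size_map size_enum_ord; apply: hid.
Qed.
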